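(* Let $n\ge1$ and let $f,g_1$ be as defined in the context. The set $\{v\in\mathbb{R}^{n+1}: g_1(v)=0,\ \sum_i v_i=0,\ \sum_i v_i^2=1\}$ equals $\{v\in\mathbb{R}^{n+1}:\sigma_1(v)=0,\ \sigma_2(v)=-\tfrac12,\ \sigma_3(v)=0\}$, and on this set $f=\frac{9(n-1)}{8(n+1)}-\sigma_4$. Consequently, finding the critical points (local extrema) of the minimization problem $\min f$ subject to $g_1=0$, $\sum_i v_i=0$, $\sum_i v_i^2=1$ is equivalent to finding the critical points of the problem $\max\sigma_4$ subject to $\sigma_1=0$, $\sigma_2=-\frac12$, $\sigma_3=0$.
   Context: For $v=(v_1,\dots,v_{n+1})$, $\sigma_k$ denotes the $k$-th elementary symmetric polynomial in $v_1,\dots,v_{n+1}$ ($\sigma_k=0$ for $k>n+1$), and $P=\sum_j v_j^2$. Define $u_i(v)=\frac{2+P}{2(n+1)}-\frac{v_i^2}{2}$, $\tilde u_i(v)=\frac{3P}{2(n+1)}-\frac{v_i^2}{2}$, $f(v)=\sum_i u_i(v)^2-2u_{n+1}(v)+1-v_{n+1}^2$ and $g_1(v)=\sum_i\tilde u_i(v)v_i$. The minimization problem describes the squared radii of circumscribing cylinders of the regular simplex with vertices $e_1,\dots,e_{n+1}$ in the hyperplane $\sum x_i=1$ of $\mathbb{R}^{n+1}$, with axis direction $v$. *)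

(* R is an arbitrary real field; vectors of R^(n+1) are
   functions 'I_(n.+1) -> R (index n+1 of the paper = ord_max). *)
From mathcomp Require Import all_boot all_order all_algebra.
Set Implicit Arguments. Unset Strict Implicit. Unset Printing Implicit Defensive.
Import Order.TTheory GRing.Theory Num.Theory.
Local Open Scope ring_scope.

Section Defs.
Variable R : realFieldType.

Definition elsym (m k : nat) (v : 'I_m -> R) : R :=
  \sum_(A : {set 'I_m} | #|A| == k) \prod_(i in A) v i.

Variable n : nat.

Definition Psq (v : 'I_n.+1 -> R) : R := \sum_j v j ^+ 2.

Definition u (v : 'I_n.+1 -> R) (i : 'I_n.+1) : R :=
  (2 + Psq v) / (2 * n.+1%:R) - v i ^+ 2 / 2.

Definition ut (v : 'I_n.+1 -> R) (i : 'I_n.+1) : R :=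
  3 * Psq v / (2 * n.+1%:R) - v i ^+ 2 / 2.

Definition fobj (v : 'I_n.+1 -> R) : R :=
  \sum_i u v i ^+ 2 - 2 * u v ord_max + 1 - v ord_max ^+ 2.

Definition g1 (v : 'I_n.+1 -> R) : R := \sum_i ut v i * v i.

Definition Sorig (v : 'I_n.+1 -> R) : Prop :=
  g1 v = 0 /\ \sum_i v i = 0 /\ Psq v = 1.

Definition Ssym (v : 'I_n.+1 -> R) : Prop :=
  elsym 1%N v = 0 /\ elsym 2%N v = - (1 / 2) /\ elsym 3%N v = 0.

Definition dist2 (v w : 'I_n.+1 -> R) : R := \sum_i (w i - v i) ^+ 2.

Definition loc_min_on (S : ('I_n.+1 -> R) -> Prop) (F : ('I_n.+1 -> R) -> R)
  (v : 'I_n.+1 -> R) : Prop :=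
  S v /\ exists eps : R, 0 < eps /\
    forall w, S w -> dist2 v w < eps -> F v <= F w.

Definition loc_max_on (S : ('I_n.+1 -> R) -> Prop) (F : ('I_n.+1 -> R) -> R)
  (v : 'I_n.+1 -> R) : Prop :=
  S v /\ exists eps : R, 0 < eps /\
    forall w, S w -> dist2 v w < eps -> F w <= F v.

End Defs.

(* By Newton's identities, on the hyperplane sigma_1 = p_1 = 0 the constraints
   of both problems are statements about the power sums p_2 and p_3, and both
   reduce to p_2 = 1, p_3 = 0.  The objective f only involves p_2 and p_4 there,
   and Newton's identity for sigma_4 turns p_4 into an affine function of
   sigma_4 with negative slope, which exchanges minima and maxima. *)
From mathcomp Require Import all_boot all_order all_algebra.
From mathcomp Require Import mpoly ring lra.
Import Order.TTheory GRing.Theory Num.Theory.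
Local Open Scope ring_scope.

Section ElementarySymmetric.
Context {R : realFieldType}.

Definition psum {m} k (v : 'I_m -> R) : R := \sum_i v i ^+ k.

Lemma elsym_meval m k (v : 'I_m -> R) : elsym k v = (mesym m R k).@[v].
Proof.
rewrite /elsym /mesym raddf_sum /=; apply: eq_bigr => A _.
by rewrite rmorph_prod /=; apply: eq_bigr => i _; rewrite mevalXU.
Qed.

Lemma elsym0 m (v : 'I_m -> R) : elsym 0 v = 1.
Proof. by rewrite elsym_meval mesym0E meval1. Qed.

Lemma elsym_ord0 k (v : 'I_0 -> R) : elsym k.+1 v = 0.
Proof. by rewrite elsym_meval mesym_geqnE // meval0. Qed.

Lemma elsym_recr m k (v : 'I_m.+1 -> R) :
  let v' i := v (widen_ord (leqnSn m) i) in
  elsym k.+1 v = elsym k.+1 v' + v ord_max * elsym k v'.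
Proof.
rewrite /= !elsym_meval mesymSS mevalD mevalM mevalXU mulrC.
congr (_ + _ * _); rewrite /mesym (big_morph _ (@mwidenD _ _) (@mwiden0 _ _)).
all: rewrite !raddf_sum /=; apply: eq_bigr => A _.
all: rewrite (big_morph _ (@mwidenM _ _) (@mwiden1 _ _)) !rmorph_prod /=.
all: by apply: eq_bigr => i _; rewrite mwidenX mnmwiden1 !mevalXU.
Qed.

Lemma elsym_newton {m} (v : 'I_m -> R) :
  let p k := psum k v in
  [/\ elsym 1 v = p 1%N,
      elsym 2 v = (p 1%N ^+ 2 - p 2%N) / 2,
      elsym 3 v = (p 1%N ^+ 3 - 3 * p 1%N * p 2%N + 2 * p 3%N) / 6 &
      elsym 4 v = (p 1%N ^+ 4 - 6 * p 1%N ^+ 2 * p 2%N + 3 * p 2%N ^+ 2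
                   + 8 * p 1%N * p 3%N - 6 * p 4%N) / 24].
Proof.
elim: m v => [|m IH] v /=.
  by rewrite /psum !big_ord0 !elsym_ord0; split; field.
have [e1 e2 e3 e4] := IH (fun i => v (widen_ord (leqnSn m) i)).
rewrite !elsym_recr /= e1 e2 e3 e4 elsym0 /psum !big_ord_recr /= !expr1.
by split; field.
Qed.

End ElementarySymmetric.

Section LocalExtrema.
Variables (R : realFieldType) (n : nat).
Variables (S T : ('I_n.+1 -> R) -> Prop) (F G : ('I_n.+1 -> R) -> R) (c : R).
Hypothesis eq_ST : forall v, S v <-> T v.
Hypothesis F_shiftN : forall v, S v -> F v = c - G v.

Lemma loc_min_on_shiftN v : loc_min_on S F v <-> loc_max_on T G v.
Proof.
split=> -[Xv [e [e_gt0 ext]]].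
- split; first exact/eq_ST.
  exists e; split=> // w Tw vw; have Sw : S w by apply/eq_ST.
  by have := ext w Sw vw; rewrite !F_shiftN // lerD2l lerN2.
- have Sv : S v by apply/eq_ST.
  split=> //; exists e; split=> // w Sw vw.
  by have := ext w (proj1 (eq_ST w) Sw) vw; rewrite !F_shiftN // lerD2l lerN2.
Qed.

End LocalExtrema.

Lemma loc_max_on_shiftN (R : realFieldType) (n : nat)
    (S T : ('I_n.+1 -> R) -> Prop) (F G : ('I_n.+1 -> R) -> R) (c : R) :
    (forall v, S v <-> T v) -> (forall v, S v -> F v = c - G v) ->
  forall v, loc_max_on S F v <-> loc_min_on T G v.
Proof.
move=> eq_ST F_shiftN v; symmetry.
apply: (@loc_min_on_shiftN R n T S G F c) => [w | w Tw]; first by symmetry.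
by rewrite F_shiftN ?subKr //; apply/eq_ST.
Qed.

Section CylinderProblem.
Variables (R : realFieldType) (n : nat).
Local Notation N := (n.+1%:R : R).

Lemma sum_psum1 (v : 'I_n.+1 -> R) : \sum_i v i = psum 1 v.
Proof. by apply: eq_bigr => i _; rewrite expr1. Qed.

Lemma g1_psum (v : 'I_n.+1 -> R) :
  g1 v = 3 * psum 2 v / (2 * N) * psum 1 v - psum 3 v / 2.
Proof.
rewrite -[psum 2 v]/(Psq v) /g1 /psum /ut mulr_sumr mulr_suml -sumrB.
by apply: eq_bigr => i _; rewrite !exprS expr0; ring.
Qed.

Lemma sum_u_sq (v : 'I_n.+1 -> R) :
  let a := (2 + psum 2 v) / (2 * N) in
  \sum_i u v i ^+ 2 = N * a ^+ 2 - a * psum 2 v + psum 4 v / 4.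
Proof.
move=> a.
have -> : N * a ^+ 2 = \sum_(i < n.+1) a ^+ 2 by rewrite sumr_const card_ord mulr_natl.
rewrite /a -[psum 2 v]/(Psq v) mulr_sumr.
rewrite mulr_suml -sumrB -big_split /=.
apply: eq_bigr => i _; rewrite /u /psum.
by field; rewrite addrC natr1 pnatr_eq0.
Qed.

Lemma Sorig_psum (v : 'I_n.+1 -> R) :
  Sorig v <-> [/\ psum 1 v = 0, psum 2 v = 1 & psum 3 v = 0].
Proof.
rewrite /Sorig g1_psum sum_psum1 -[Psq v]/(psum 2 v).
split=> [[g1_0 [p1 p2]] | [p1 p2 p3]]; last by rewrite p1 p3 mulr0 mul0r subrr.
by move: g1_0; rewrite p1 p2 mulr0 sub0r => p3; split=> //; lra.
Qed.

Lemma Ssym_psum (v : 'I_n.+1 -> R) :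
  Ssym v <-> [/\ psum 1 v = 0, psum 2 v = 1 & psum 3 v = 0].
Proof.
rewrite /Ssym; have [-> -> -> _] := elsym_newton v.
split=> [[p1 [e2 e3]] | [-> -> ->]]; last by split; [|split]; lra.
by move: e2 e3; rewrite p1 => e2 e3; split=> //; lra.
Qed.

Lemma Sorig_Ssym (v : 'I_n.+1 -> R) : Sorig v <-> Ssym v.
Proof. by rewrite Sorig_psum Ssym_psum. Qed.

Lemma fobj_Sorig (v : 'I_n.+1 -> R) : Sorig v ->
  fobj v = 9 * (n%:R - 1) / (8 * N) - elsym 4 v.
Proof.
move=> /Sorig_psum[p1 p2 p3]; have [_ _ _ ->] := elsym_newton v.
rewrite /fobj sum_u_sq /u -[Psq v]/(psum 2 v) p1 p2 p3 -[N]natr1.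
by field; rewrite natr1 pnatr_eq0.
Qed.

End CylinderProblem.

Theorem mainTheorem9 (R : realFieldType) (n : nat) (hn : (1 <= n)%N) :
  (forall v : 'I_n.+1 -> R, Sorig v <-> Ssym v) /\
  (forall v : 'I_n.+1 -> R, Sorig v ->
     fobj v = 9 * (n%:R - 1) / (8 * n.+1%:R) - elsym 4%N v) /\
  (forall v : 'I_n.+1 -> R,
     loc_min_on (@Sorig R n) (@fobj R n) v <->
     loc_max_on (@Ssym R n) (@elsym R n.+1 4%N) v) /\
  (forall v : 'I_n.+1 -> R,
     loc_max_on (@Sorig R n) (@fobj R n) v <->
     loc_min_on (@Ssym R n) (@elsym R n.+1 4%N) v).
Proof.
have eqS := @Sorig_Ssym R n; have fE := @fobj_Sorig R n.
split=> //; split=> //; split.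
- exact: loc_min_on_shiftN eqS fE.
- exact: loc_max_on_shiftN eqS fE.
Qed.
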